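(* Let $X,Y$ be topological spaces and $f:X\to Y$ a function. Then $f$ is statistically continuous if and only if $f^{-1}(B)$ is statistically closed in $X$ for every statistically closed subset $B$ of $Y$.
   Context: For $A\subseteq\mathbb{N}$ let $d_n(A)=|A\cap\{1,\dots,n\}|/n$, $\overline{d}(A)=\limsup_n d_n(A)$, $\underline{d}(A)=\liminf_n d_n(A)$, and $d(A)$ their common value when equal. A sequence in $X$ is a map from an infinite subset $M\subseteq\mathbb{N}$ into $X$, written $(x_n)_{n\in M}$; a subsequence is $(x_n)_{n\in N}$ with $N\subseteq M$ infinite. It is nonthin if $\overline{d}(M)>0$. A nonthin sequence $(x_n)_{n\in M}$ is statistically convergent to $a\in X$ if for every open $U\ni a$, $d(\{n\in M:x_n\notin U\})=0$. The statistical closure $\overline{F}^{ST}$ of $F\subseteq X$ is the set of $x\in X$ such that some nonthin sequence in $F$ is statistically convergent to $x$; $F$ is statistically closed if $\overline{F}^{ST}=F$. A function $f:X\to Y$ is statistically continuous if whenever a nonthin sequence $(x_n)_{n\in K}$ in $X$ statistically converges to $x$, the sequence $(f(x_n))_{n\in K}$ statistically converges to $f(x)$. *)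

From HB Require Import structures.
From mathcomp Require Import all_boot all_order all_algebra.
From mathcomp Require Import all_classical all_reals all_analysis.
From mathcomp Require Import Rstruct Rstruct_topology.
Set Implicit Arguments. Unset Strict Implicit. Unset Printing Implicit Defensive.
Import Order.TTheory GRing.Theory Num.Theory.
Import numFieldNormedType.Exports.
Local Open Scope classical_set_scope.
Local Open Scope ring_scope.

Definition dn (A : set nat) (n : nat) : Rdefinitions.R :=
  (\sum_(1 <= i < n.+1) ((i \in A) : nat)%:R) / n%:R.

Definition upper_density_pos (A : set nat) : Prop :=
  exists2 e : Rdefinitions.R, 0 < e & forall N : nat, exists2 n : nat, (N <= n)%N & e <= dn A n.

(* d(A) = 0 : since d_n(A) >= 0, limsup = liminf = 0 iff d_n(A) -> 0 *)
Definition density_zero (A : set nat) : Prop :=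
  dn A @ \oo --> (0 : Rdefinitions.R).

(* A sequence (x_n)_{n in M} is represented by an index set M and x : nat -> X
   (only the values on M matter). Nonthin: upper density of M is positive. *)
Definition nonthin (M : set nat) : Prop := upper_density_pos M.

Definition stat_conv (X : topologicalType) (M : set nat) (x : nat -> X) (a : X) : Prop :=
  nonthin M /\
  forall U : set X, open U -> U a -> density_zero [set n | M n /\ ~ U (x n)].

Definition stat_closure (X : topologicalType) (F : set X) : set X :=
  [set a | exists M : set nat, exists x : nat -> X,
      nonthin M /\ (forall n, M n -> F (x n)) /\ stat_conv M x a].

Definition stat_closed (X : topologicalType) (F : set X) : Prop :=
  stat_closure F = F.

Definition stat_continuous (X Y : topologicalType) (f : X -> Y) : Prop :=
  forall (K : set nat) (x : nat -> X) (a : X),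
    nonthin K -> stat_conv K x a -> stat_conv K (f \o x) (f a).

(* A statistically convergent sequence takes values in any open neighbourhood of its
   limit except on a set of density zero, so it cannot live, on a nonthin index set,
   in the complement of an open set containing the limit: complements of open sets are
   statistically closed.  Hence if preimages of statistically closed sets are
   statistically closed and (f x_n) failed to enter an open V around f a on a nonthin
   set N, the subsequence (x_n)_{n in N} would converge statistically to a inside
   f^-1(~V), forcing f a outside V. *)
From mathcomp Require Import all_boot all_order all_algebra all_classical all_reals all_analysis.
From mathcomp Require Import Rstruct Rstruct_topology.
Set Implicit Arguments. Unset Strict Implicit. Unset Printing Implicit Defensive.
Import Order.TTheory GRing.Theory Num.Theory.
Import numFieldNormedType.Exports.
Local Open Scope classical_set_scope.
Local Open Scope ring_scope.

Lemma dn_ge0 (A : set nat) (n : nat) : 0 <= dn A n.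
Proof. by rewrite /dn divr_ge0 // sumr_ge0. Qed.

Lemma le_dn (A B : set nat) (n : nat) : A `<=` B -> dn A n <= dn B n.
Proof.
move=> AB; rewrite /dn ler_wpM2r ?invr_ge0 //; apply: ler_sum => i _.
rewrite ler_nat; case: (boolP (i \in A)) => //= /set_mem /AB /mem_set -> //.
Qed.

Lemma density_zero_sub (A B : set nat) : A `<=` B -> density_zero B -> density_zero A.
Proof.
move=> AB dzB; apply: (@squeeze_cvgr _ _ _ _ (fun=> 0) (dn B)); last 2 first.
- exact: cvg_cst.
- exact: dzB.
by near=> n; rewrite dn_ge0 le_dn.
Unshelve. all: by end_near.
Qed.

Lemma density_zero_set0 : density_zero set0.
Proof.
rewrite /density_zero; have -> : dn set0 = fun=> 0.
  by apply/funext => n; rewrite /dn big1 ?mul0r // => i _; rewrite in_set0.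
exact: cvg_cst.
Qed.

Lemma nonthinT : nonthin setT.
Proof.
exists 1 => // N; exists N.+1 => //.
rewrite /dn (eq_bigr (fun=> 1)) => [|i _]; last by rewrite in_setT.
by rewrite sumr_const_nat subn1 /= divff.
Qed.

Lemma nonthinE (A : set nat) : nonthin A <-> ~ density_zero A.
Proof.
split.
- move=> [e e0 dnAe] /(@cvgrPdist_lt _ Rdefinitions.R^o) /(_ e e0) [N _ dnA_lt].
  have [n Nn] := dnAe N.
  have := dnA_lt n Nn; rewrite sub0r normrN ger0_norm ?dn_ge0 //.
  by move=> /lt_le_trans h /h; rewrite ltxx.
- move=> ndzA; apply: contrapT => thinA; apply: ndzA.
  apply/(@cvgrPdist_lt _ Rdefinitions.R^o) => e e0.
  have [N dnA_lt] : exists N, forall n, (N <= n)%N -> dn A n < e.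
    apply: contrapT => noN; apply: thinA; exists e => // N.
    apply: contrapT => small; apply: noN; exists N => n Nn.
    by rewrite ltNge; apply/negP => dnAe; apply: small; exists n.
  by exists N => // n /= Nn; rewrite sub0r normrN ger0_norm ?dn_ge0 ?dnA_lt.
Qed.

Section StatisticalConvergence.
Context {X : topologicalType}.

Lemma stat_conv_cst (a : X) : stat_conv setT (fun=> a) a.
Proof.
split; first exact: nonthinT.
move=> U _ Ua; rewrite (_ : [set n | _] = set0); first exact: density_zero_set0.
by apply/seteqP; split => n // [].
Qed.

Lemma stat_conv_sub (K N : set nat) (x : nat -> X) (a : X) :
  N `<=` K -> nonthin N -> stat_conv K x a -> stat_conv N x a.
Proof.
move=> NK nN [_ cvx]; split => // U oU Ua.
by apply: density_zero_sub (cvx U oU Ua) => n [/NK].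
Qed.

Lemma subset_stat_closure (F : set X) : F `<=` stat_closure F.
Proof.
move=> a Fa; exists setT, (fun=> a).
by split; [exact: nonthinT | split => //; exact: stat_conv_cst].
Qed.

Lemma stat_closedP (F : set X) : stat_closed F <-> stat_closure F `<=` F.
Proof.
split => [-> //|clF]; apply/seteqP; split => //; exact: subset_stat_closure.
Qed.

Lemma open_stat_closedC (V : set X) : open V -> stat_closed (~` V).
Proof.
move=> oV; apply/stat_closedP => a [M [x [nM [xNV [_ cvx]]]]] Va.
have := cvx V oV Va; rewrite (_ : [set n | M n /\ ~ V (x n)] = M).
  exact/nonthinE.
by apply/seteqP; split => [n []|n Mn] //; split => //; apply: xNV.
Qed.

End StatisticalConvergence.

Theorem mainTheorem2 (X Y : topologicalType) (f : X -> Y) :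
  stat_continuous f <->
  (forall B : set Y, stat_closed B -> stat_closed (f @^-1` B)).
Proof.
split.
- move=> fc B clB; apply/stat_closedP => a [M [x [nM [Bx cvx]]]].
  by rewrite /preimage /= -clB; exists M, (f \o x); split => //; split => //; apply: fc.
- move=> clf K x a nK cvx; split => // V oV Vfa; apply: contrapT => /nonthinE nN.
  set N := [set n | K n /\ ~ V (f (x n))] in nN.
  have NK : N `<=` K by move=> n [].
  have cvNx : stat_conv N x a := stat_conv_sub NK nN cvx.
  have : stat_closure (f @^-1` (~` V)) a.
    by exists N, x; split => //; split => // n [].
  by rewrite (clf _ (open_stat_closedC oV)).
Qed.
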